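(* Let $\mathcal G$ be an ample groupoid and let $B$ be a $\mathbb B$-algebra containing a family of elements $\{t_U : U \text{ a compact open subset of } \mathcal G\}$ such that (1) $t_\varnothing=0$, and (2) $t_U+t_V=t_{U\cup V}$ and $t_U*t_V=t_{UV}$ for all compact open subsets $U,V$ of $\mathcal G$. Then there is a unique $\mathbb B$-algebra homomorphism $\pi:A_{\mathbb B}(\mathcal G)\to B$ with $\pi(1_U)=t_U$ for every compact open subset $U$ of $\mathcal G$.
   Context: $\mathbb B=(\{0,1\},\text{or},\text{and})$ is the Boolean semifield. A $\mathbb B$-algebra is a $\mathbb B$-semimodule which is also a hemiring (commutative additive monoid with $0$, associative multiplication, distributive laws) with $(sa)b=s(ab)=a(sb)$. An ample groupoid is a topological groupoid whose unit space is locally compact Hausdorff and totally disconnected and whose source and range maps $s,r$ are local homeomorphisms (the groupoid need not be Hausdorff). For $U,V\subseteq\mathcal G$, $UV=\{\alpha\beta:\alpha\in U,\beta\in V,s(\alpha)=r(\beta)\}$. The Steinberg algebra $A_{\mathbb B}(\mathcal G)$ is the set of $\mathbb B$-valued functions on $\mathcal G$ that are finite $\mathbb B$-linear combinations of characteristic functions $1_U$ of compact open bisections $U$, with pointwise addition and convolution $(f*g)(\gamma)=\sum_{\alpha\beta=\gamma}f(\alpha)g(\beta)$; its elements are exactly the $1_U$ for $U$ compact open in $\mathcal G$. *)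

From HB Require Import structures.
From mathcomp Require Import all_boot all_order.
From mathcomp Require Import boolp classical_sets topology.
From Stdlib Require List.

Set Implicit Arguments.
Unset Strict Implicit.
Unset Printing Implicit Defensive.

Local Open Scope classical_set_scope.

(* B-algebras over the Boolean semifield B = ({0,1}, or, and), modelled by   *)
(* bool with (orb, andb).  Carrier A with addition add, zero, multiplication *)
(* mul and scalar action scale : bool -> A -> A.                             *)
Definition is_Balgebra (A : Type) (add : A -> A -> A) (zero : A)
    (mul : A -> A -> A) (scale : bool -> A -> A) : Prop :=
  [/\
   (forall a b c, add a (add b c) = add (add a b) c),
   (forall a b, add a b = add b a) /\ (forall a, add zero a = a),
   ((forall s a b, scale s (add a b) = add (scale s a) (scale s b)) /\
    (forall s t a, scale (s || t) a = add (scale s a) (scale t a)) /\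
    (forall s t a, scale (s && t) a = scale s (scale t a)) /\
    (forall a, scale true a = a) /\
    (forall a, scale false a = zero) /\
    (forall s, scale s zero = zero)),
   [/\ (forall a b c, mul a (mul b c) = mul (mul a b) c),
       (forall a b c, mul a (add b c) = add (mul a b) (mul a c)) &
       (forall a b c, mul (add a b) c = add (mul a c) (mul b c))] &
   (forall s a b, mul (scale s a) b = scale s (mul a b) /\
                  scale s (mul a b) = mul a (scale s b))].

(* Groupoids.  A groupoid is presented two-sortedly: arrows G, unit space X, *)
(* source/range s r : G -> X, unit inclusion u : X -> G (u x is the identity *)
(* arrow at x, so G^(0) = u(X)), multiplication mul (meaningful on           *)
(* composable pairs, s a = r b) and inverse inv.                             *)
Definition composable (G X : Type) (s r : G -> X) (a b : G) := s a = r b.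

Definition is_groupoid (G X : Type) (s r : G -> X) (u : X -> G)
    (mul : G -> G -> G) (inv : G -> G) : Prop :=
  [/\ (forall x, s (u x) = x /\ r (u x) = x),
      (forall a b, s a = r b -> r (mul a b) = r a /\ s (mul a b) = s b),
      (forall a b c, s a = r b -> s b = r c ->
          mul a (mul b c) = mul (mul a b) c),
      (forall a, mul (u (r a)) a = a /\ mul a (u (s a)) = a) &
      (forall a, [/\ s (inv a) = r a, r (inv a) = s a,
                     mul a (inv a) = u (r a) & mul (inv a) a = u (s a)])].

Definition local_homeo (G X : topologicalType) (f : G -> X) : Prop :=
  forall g : G, exists U : set G,
    [/\ open U, U g, {in U &, injective f}, {within U, continuous f} &
        (forall V : set G, open V -> V `<=` U -> open (f @` V))].

Definition embedding (X G : topologicalType) (u : X -> G) : Prop :=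
  [/\ injective u, continuous u &
      (forall V : set X, open V ->
         exists W : set G, open W /\ u @` V = W `&` range u)].

Definition is_topological_groupoid (G X : topologicalType) (s r : G -> X)
    (u : X -> G) (mul : G -> G -> G) (inv : G -> G) : Prop :=
  [/\ is_groupoid s r u mul inv,
      {within [set p : G * G | s p.1 = r p.2],
         continuous (fun p : G * G => mul p.1 p.2)},
      continuous inv,
      continuous s /\ continuous r &
      embedding u].

Definition is_ample_groupoid (G X : topologicalType) (s r : G -> X)
    (u : X -> G) (mul : G -> G -> G) (inv : G -> G) : Prop :=
  [/\ is_topological_groupoid s r u mul inv,
      hausdorff_space X,
      (forall x : X, exists2 K : set X, compact K & nbhs x K),
      totally_disconnected [set: X] &
      local_homeo s /\ local_homeo r].

Definition compact_open_set (G : topologicalType) (U : set G) := compact U /\ open U.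

Definition bisection (G X : Type) (s r : G -> X) (U : set G) :=
  {in U &, injective s} /\ {in U &, injective r}.

Definition compact_open_bisection (G : topologicalType) (X : Type)
    (s r : G -> X) (U : set G) := compact_open_set U /\ bisection s r U.

Definition setmul (G X : Type) (s r : G -> X) (mul : G -> G -> G)
    (U V : set G) : set G :=
  [set g | exists a b, [/\ U a, V b, s a = r b & g = mul a b]].

(* The Steinberg algebra A_B(G): B-valued functions G -> bool.              *)
Definition charfun (G : Type) (U : set G) : G -> bool := fun g => `[< U g >].

Definition fadd (G : Type) (f h : G -> bool) : G -> bool := fun g => f g || h g.
Definition fzero (G : Type) : G -> bool := fun _ => false.
Definition fscale (G : Type) (b : bool) (f : G -> bool) : G -> bool :=
  fun g => b && f g.
(* convolution (f*h)(g) = sum_{a b = g} f a h b, the sum taken in B *)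
Definition conv (G X : Type) (s r : G -> X) (mul : G -> G -> G)
    (f h : G -> bool) : G -> bool :=
  fun g => `[< exists a b, [/\ s a = r b, mul a b = g, f a & h b] >].

(* f is a finite B-linear combination of characteristic functions of       *)
(* compact open bisections (B-linear combinations = finite sums, as the    *)
(* scalar 0 kills a term and 1 keeps it).                                  *)
Definition in_steinberg (G : topologicalType) (X : Type) (s r : G -> X)
    (f : G -> bool) : Prop :=
  exists Us : seq (set G),
    (forall U, List.In U Us -> compact_open_bisection s r U) /\
    f = \big[@fadd G/@fzero G]_(U <- Us) charfun U.

Definition steinberg_hom (G : topologicalType) (X : Type) (s r : G -> X)
    (mul : G -> G -> G) (A : Type) (add : A -> A -> A) (zero : A)
    (mulA : A -> A -> A) (scale : bool -> A -> A) (pi : (G -> bool) -> A) :=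
  [/\ pi (@fzero G) = zero,
      (forall f h, in_steinberg s r f -> in_steinberg s r h ->
         pi (fadd f h) = add (pi f) (pi h)),
      (forall f h, in_steinberg s r f -> in_steinberg s r h ->
         pi (conv s r mul f h) = mulA (pi f) (pi h)) &
      (forall b f, in_steinberg s r f -> pi (fscale b f) = scale b (pi f))].

From mathcomp Require Import all_boot all_order.
From mathcomp Require Import boolp classical_sets topology.

(* A B-valued function f : G -> bool is the same thing as its support
   supp f = {g | f g}, and charfun is the inverse of supp.  Under this
   identification the operations of A_B(G) become set operations: the zero
   function has empty support, pointwise addition is union, scaling by
   true/false is the identity/the empty set, and convolution is the product
   UV of subsets of the groupoid.  Moreover every element of A_B(G), being a
   finite sum of characteristic functions of compact open bisections, has
   compact open support.

   Hence the only possible homomorphism is pi f := t (supp f): it sends 1_U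
   to t_U, the hypotheses on the family t make it a B-algebra homomorphism,
   and any homomorphism pi' with pi'(1_U) = t_U agrees with it because
   f = 1_(supp f) for every f. *)

Set Implicit Arguments.
Unset Strict Implicit.

Local Open Scope classical_set_scope.

Section Support.
Variable G : Type.

Definition supp (f : G -> bool) : set G := [set g | f g].

Lemma supp_charfun (U : set G) : supp (charfun U) = U.
Proof. by apply/seteqP; split => g; rewrite /supp /charfun /= asboolE. Qed.

Lemma charfun_supp (f : G -> bool) : charfun (supp f) = f.
Proof. by apply/funext => g; rewrite /charfun /supp /= asboolb. Qed.

Lemma supp_fzero : supp (@fzero G) = set0.
Proof. by apply/seteqP; split => g. Qed.

Lemma supp_fadd (f h : G -> bool) : supp (fadd f h) = supp f `|` supp h.
Proof. by apply/seteqP; split => g; rewrite /supp /fadd /= => /orP. Qed.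

Lemma supp_fscale (b : bool) (f : G -> bool) :
  supp (fscale b f) = if b then supp f else set0.
Proof. by case: b; apply/seteqP; split => g. Qed.

Lemma supp_conv (X : Type) (s r : G -> X) (mul : G -> G -> G)
    (f h : G -> bool) :
  supp (conv s r mul f h) = setmul s r mul (supp f) (supp h).
Proof.
apply/seteqP; split => g; rewrite /supp /conv /setmul /= asboolE.
- by case=> a [b [sab <- fa hb]]; exists a, b.
- by case=> a [b [fa hb sab ->]]; exists a, b.
Qed.

End Support.

(* Every element of the Steinberg algebra has compact open support: a finite
   union of compact open bisections is compact open. *)
Lemma steinberg_supp_compact_open (G : topologicalType) (X : Type)
    (s r : G -> X) (f : G -> bool) :
  in_steinberg s r f -> compact_open_set (supp f).
Proof.
case=> Us [coUs ->]; elim: Us coUs => [|U Us IH] coUs.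
  by rewrite big_nil supp_fzero; split; [exact: compact0 | exact: open0].
have [[cU oU] _] := coUs U (or_introl erefl).
have [cUs oUs] := IH (fun V hV => coUs V (or_intror hV)).
rewrite big_cons supp_fadd supp_charfun.
by split; [exact: compactU | exact: openU].
Qed.

Section UniversalProperty.
Variables (G : topologicalType) (X : Type) (s r : G -> X) (mul : G -> G -> G).
Variables (A : Type) (add : A -> A -> A) (zero : A) (mulA : A -> A -> A).
Variable (scale : bool -> A -> A) (t : set G -> A).

Definition induced_hom (f : G -> bool) : A := t (supp f).

Lemma induced_hom_charfun (U : set G) : induced_hom (charfun U) = t U.
Proof. by rewrite /induced_hom supp_charfun. Qed.

Lemma induced_hom_is_hom :
  (forall a, scale true a = a) -> (forall a, scale false a = zero) ->
  t set0 = zero ->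
  (forall U V, compact_open_set U -> compact_open_set V ->
     add (t U) (t V) = t (U `|` V) /\ mulA (t U) (t V) = t (setmul s r mul U V)) ->
  steinberg_hom s r mul add zero mulA scale induced_hom.
Proof.
move=> scale1 scale0 t0 tUV; rewrite /induced_hom; split.
- by rewrite supp_fzero.
- move=> f h /steinberg_supp_compact_open cof /steinberg_supp_compact_open coh.
  by rewrite supp_fadd (proj1 (tUV _ _ cof coh)).
- move=> f h /steinberg_supp_compact_open cof /steinberg_supp_compact_open coh.
  by rewrite supp_conv (proj2 (tUV _ _ cof coh)).
- by move=> [] f _; rewrite supp_fscale ?scale1 ?scale0.
Qed.

(* A homomorphism is determined by its values on characteristic functions of
   compact open sets, since every element f of A_B(G) equals 1_(supp f). *)
Lemma hom_unique (pi : (G -> bool) -> A) :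
  (forall U, compact_open_set U -> pi (charfun U) = t U) ->
  forall f, in_steinberg s r f -> pi f = induced_hom f.
Proof.
move=> piU f /steinberg_supp_compact_open cof.
by rewrite -{1}(charfun_supp f) piU.
Qed.

End UniversalProperty.

Theorem corollary2p5 (G X : topologicalType) (s r : G -> X) (u : X -> G)
    (mul : G -> G -> G) (inv : G -> G)
    (A : Type) (add : A -> A -> A) (zero : A) (mulA : A -> A -> A)
    (scale : bool -> A -> A) (t : set G -> A) :
  is_ample_groupoid s r u mul inv ->
  is_Balgebra add zero mulA scale ->
  t set0 = zero ->
  (forall U V, compact_open_set U -> compact_open_set V ->
     add (t U) (t V) = t (U `|` V) /\ mulA (t U) (t V) = t (setmul s r mul U V)) ->
  exists pi : (G -> bool) -> A,
    [/\ steinberg_hom s r mul add zero mulA scale pi,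
        (forall U, compact_open_set U -> pi (charfun U) = t U) &
        (forall pi' : (G -> bool) -> A,
           steinberg_hom s r mul add zero mulA scale pi' ->
           (forall U, compact_open_set U -> pi' (charfun U) = t U) ->
           forall f, in_steinberg s r f -> pi' f = pi f)].
Proof.
move=> _ [_ _ [_ [_ [_ [scale1 [scale0 _]]]]] _ _] t0 tUV.
exists (induced_hom t); split.
- exact: induced_hom_is_hom.
- by move=> U _; exact: induced_hom_charfun.
- by move=> pi' _ pi'U; exact: hom_unique.
Qed.
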